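(* Fix $c_1\in(c_0,1)$, $c\in(c_0,c_1)$ and $R_0\in\mathcal{R}_c$, and for $0<\delta<\delta_0$ let $R_\delta=R_0-I_\delta+S_\delta$ be the travelling wave provided by the Main Theorem (so $S_\delta\in W^{2,\infty}(\mathbb{R})$, $S_\delta(0)=0$, $\|S_\delta\|_\infty\le C\delta^2$, $\|S_\delta'\|_\infty\le C\delta$, $\|S_\delta''\|_\infty\le C$, and $S_\delta$ has harmonic tails with wave number $k_c$ at $\pm\infty$, a limit at $+\infty$). Then the configurational forces satisfy $$\Upsilon_\delta=\Upsilon_0+O(\delta^2)\qquad(\delta\to0).$$
   Context: $\Delta_1F(x)=F(x+1)-2F(x)+F(x-1)$, $a(k)=\frac{\sin(k/2)}{k/2}$, $\Psi_0'(r)=\mathrm{sgn}(r)$, $\Phi_0(r)=\frac12r^2-|r|$. Potentials: $(\Psi_\delta)_{\delta>0}$ is a family of $C^2$ functions with $\Psi_\delta(0)=0$ such that $\Psi_\delta'(r)=\mathrm{sgn}(r)$ for $r\notin(-\delta,\delta)$, and $|\Psi_\delta'|\le C_\Psi$, $|\Psi_\delta''|\le C_\Psi/\delta$ on $\mathbb{R}$ with $C_\Psi$ independent of $\delta$; $\Phi_\delta(r)=\frac12r^2-\Psi_\delta(r)$; $I_\delta:=\frac12\int_{\mathbb{R}}(\Psi_\delta'-\Psi_0')\,dr$. Travelling waves solve $c^2R''=\Delta_1(R-\Psi_\delta'(R))$. Unperturbed waves (standing hypothesis, a known result): there are constants $0<c_0<1$ and $x_0,r_0,d_0,D_0>0$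 such that for every $c\in[c_0,1)$ the equation $a(k)=c$ has exactly one positive solution $k_c$, and there is a two-parameter family $\mathcal{R}_c$ of functions $R_0\in W^{2,\infty}(\mathbb{R})$ solving $c^2R_0''=\Delta_1(R_0-\mathrm{sgn}(R_0))$ with $R_0(0)=0$, given by $R_0=\bar R_0+\alpha(\cos(k_c\cdot)-1)+\beta\sin(k_c\cdot)$, $(\alpha,\beta)$ in an open neighbourhood $U_c$ of $0\in\mathbb{R}^2$, where $\bar R_0$ is a fixed member for which $\lim_{x\to+\infty}\bar R_0(x)$ exists and $\lim_{x\to-\infty}(\bar R_0(x)-\alpha_c^-(\cos(k_cx)-1)-\beta_c^-\sin(k_cx))$ exists for some constants $\alpha_c^-,\beta_c^-$. Every $R_0\in\mathcal{R}_c$ satisfies $\|R_0\|_\infty\le D_0(1-c^2)^{-1}$, $R_0(x)>r_0$ for $x>x_0$, $R_0(x)<-r_0$ for $x<-x_0$, $R_0'(x)>d_0$ for $|x|<x_0$. Configurational force of a wave $R_\delta$ (with $R_0$ corresponding to $\delta=0$): macroscopic strains $\bar r_{\delta,\pm}=\lim_{L\to\infty}\frac1L\int_0^L R_\delta(\pm x)\,dx$; $\Upsilon_{e,\delta}=\Phi_\delta(\bar r_{\delta,+})-\Phi_\delta(\bar r_{\delta,-})$, $\Upsilon_{f,\delta}=\frac12\big(\Phi_\delta'(\bar r_{\delta,+})+\Phi_\delta'(\bar r_{\delta,-})\big)(\bar r_{\delta,+}-\bar r_{\delta,-})$, and $\Upsilon_\delta=\Upsilon_{e,\delta}-\Upsilon_{f,\delta}$.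 *)

From Stdlib Require Import Reals Lra.
Open Scope R_scope.

(* sign function; the value at 0 is irrelevant for everything below *)
Definition sgn (r : R) : R :=
  if Rlt_dec 0 r then 1 else if Rlt_dec r 0 then -1 else 0.

Definition Delta1 (F : R -> R) (x : R) : R := F (x + 1) - 2 * F x + F (x - 1).

Definition adisp (k : R) : R := sin (k / 2) / (k / 2).

Definition lim_pinf (f : R -> R) (l : R) : Prop :=
  forall eps, 0 < eps -> exists M, forall x, M < x -> Rabs (f x - l) < eps.
Definition lim_minf (f : R -> R) (l : R) : Prop :=
  forall eps, 0 < eps -> exists M, forall x, x < M -> Rabs (f x - l) < eps.

Definition improper_int (f : R -> R) (l : R) : Prop :=
  forall eps, 0 < eps -> exists M, forall a b, a < - M -> M < b ->
    exists pr : Riemann_integrable f a b, Rabs (RiemannInt pr - l) < eps.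

(* macroscopic strain: lim_{L -> oo} (1/L) int_0^L f(x) dx = m *)
Definition mean_limit (f : R -> R) (m : R) : Prop :=
  forall eps, 0 < eps -> exists L0, 0 < L0 /\ forall L, L0 < L ->
    exists pr : Riemann_integrable f 0 L, Rabs (RiemannInt pr / L - m) < eps.

(* configurational force Upsilon = Upsilon_e - Upsilon_f for a potential Phi
   with derivative dPhi and macroscopic strains rp (at +oo) and rm (at -oo) *)
Definition Upsilon (Phi dPhi : R -> R) (rp rm : R) : R :=
  (Phi rp - Phi rm) - / 2 * (dPhi rp + dPhi rm) * (rp - rm).

Definition Phi0 (r : R) : R := / 2 * r ^ 2 - Rabs r.
Definition dPhi0 (r : R) : R := r - sgn r.

Definition Phid (Psi : R -> R) (r : R) : R := / 2 * r ^ 2 - Psi r.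
Definition dPhid (dPsi : R -> R) (r : R) : R := r - dPsi r.

Definition potential_family (Psi dPsi ddPsi : R -> R -> R) (CPsi : R) : Prop :=
  forall d, 0 < d ->
    (forall r, derivable_pt_lim (Psi d) r (dPsi d r)) /\
    (forall r, derivable_pt_lim (dPsi d) r (ddPsi d r)) /\
    continuity (ddPsi d) /\
    Psi d 0 = 0 /\
    (forall r, (r <= - d \/ d <= r) -> dPsi d r = sgn r) /\
    (forall r, Rabs (dPsi d r) <= CPsi) /\
    (forall r, Rabs (ddPsi d r) <= CPsi / d).

From Stdlib Require Import Reals Lra.
From Coquelicot Require Import Coquelicot.
Open Scope R_scope.

(* The configurational force depends on a wave only through its two
   macroscopic strains.  For the sharp potential Phi_0 and strains
   r_+ > 0 > r_-, a direct computation gives Upsilon_0 = - r_+ - r_-.  For the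
   regularised potential Phi_delta and strains outside the window (-delta, delta),
   Psi_delta is affine with slope +1 resp. -1 on each side, and integrating
   Psi_delta' - sgn over R yields Psi_delta(r_+) - Psi_delta(r_-) = 2 I_delta + r_+ + r_-,
   hence Upsilon_delta = - 2 I_delta - r_+ - r_-.

   Since R_delta = R_0 - I_delta + S_delta with |S_delta| <= C delta^2, averaging
   shows that the strains of R_delta are those of R_0 shifted by - I_delta, up to
   C delta^2; as |I_delta| <= C_Psi delta and the strains of R_0 stay at distance
   r_0 from 0, they lie outside the window for small delta.  The shifts by
   - I_delta cancel the term - 2 I_delta, leaving |Upsilon_delta - Upsilon_0| <= 2 C delta^2. *)

Lemma mean_limit_minus (F f : R -> R) (m1 m2 : R) :
  mean_limit F m1 -> mean_limit f m2 ->
  mean_limit (fun x => F x - f x) (m1 - m2).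
Proof.
  intros H1 H2 eps Heps.
  destruct (H1 (eps / 2) ltac:(lra)) as [L1 [HL1 H1']].
  destruct (H2 (eps / 2) ltac:(lra)) as [L2 [HL2 H2']].
  exists (Rmax L1 L2); split; [apply (Rlt_le_trans _ L1); [lra | apply Rmax_l]|].
  intros L HL. apply Rmax_Rlt in HL as [HL1' HL2'].
  destruct (H1' L HL1') as [pr1 E1]. destruct (H2' L HL2') as [pr2 E2].
  assert (ex1 := ex_RInt_Reals_1 _ _ _ pr1). assert (ex2 := ex_RInt_Reals_1 _ _ _ pr2).
  assert (Hlin : RInt (fun x => F x - f x) 0 L = RInt F 0 L - RInt f 0 L)
    by exact (RInt_minus F f 0 L ex1 ex2).
  exists (ex_RInt_Reals_0 _ _ _ (ex_RInt_minus F f 0 L ex1 ex2)).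
  rewrite <- RInt_Reals, Hlin.
  rewrite <- (RInt_Reals _ _ _ pr1) in E1. rewrite <- (RInt_Reals _ _ _ pr2) in E2.
  apply Rabs_lt_between in E1, E2. apply Rabs_lt_between.
  replace ((RInt F 0 L - RInt f 0 L) / L - (m1 - m2))
    with ((RInt F 0 L / L - m1) - (RInt f 0 L / L - m2)) by (field; lra).
  lra.
Qed.

Lemma integral_eventual_bounds (f : R -> R) (x0 L M lo hi : R)
  (pr : Riemann_integrable f 0 L) :
  0 < x0 <= L -> (forall x, Rabs (f x) <= M) ->
  (forall x, x0 < x -> lo <= f x <= hi) ->
  lo * L - (Rabs lo + M) * x0 <= RiemannInt pr <= hi * L + (Rabs hi + M) * x0.
Proof.
  intros Hx0 HM Hf.
  pose (prA := RiemannInt_P22 pr (conj (Rlt_le _ _ (proj1 Hx0)) (proj2 Hx0))).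
  pose (prB := RiemannInt_P23 pr (conj (Rlt_le _ _ (proj1 Hx0)) (proj2 Hx0))).
  rewrite <- (RiemannInt_P26 prA prB pr).
  assert (BA := RiemannInt_const_bound prA (Rlt_le _ _ (proj1 Hx0))
                  (fun x _ => proj1 (Rabs_le_between _ _) (HM x))).
  assert (BB := RiemannInt_const_bound prB (proj2 Hx0) (fun x Hx => Hf x (proj1 Hx))).
  assert (lo * x0 <= Rabs lo * x0) by (apply Rmult_le_compat_r; [lra | apply Rle_abs]).
  assert (- hi * x0 <= Rabs hi * x0) by (apply Rmult_le_compat_r; [lra | apply Rabs_maj2]).
  lra.
Qed.

Lemma mean_limit_between (f : R -> R) (m x0 M lo hi : R) :
  0 < x0 -> mean_limit f m -> (forall x, Rabs (f x) <= M) ->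
  (forall x, x0 < x -> lo <= f x <= hi) -> lo <= m <= hi.
Proof.
  intros Hx0 Hm HM Hf.
  set (K := (Rabs lo + Rabs hi + M) * x0).
  assert (HK : 0 <= K).
  { unfold K. generalize (Rabs_pos lo) (Rabs_pos hi) (Rle_trans _ _ _ (Rabs_pos _) (HM 0)).
    nra. }
  assert (Happrox : forall eps, 0 < eps -> lo - 2 * eps <= m <= hi + 2 * eps).
  { intros eps Heps. destruct (Hm eps Heps) as [L0 [_ HL0]].
    set (L := Rmax L0 (Rmax x0 (K / eps)) + 1).
    assert (HL : L0 < L /\ x0 < L /\ K / eps < L).
    { unfold L. generalize (Rmax_l L0 (Rmax x0 (K / eps))) (Rmax_r L0 (Rmax x0 (K / eps)))
        (Rmax_l x0 (K / eps)) (Rmax_r x0 (K / eps)). lra. }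
    destruct HL as [HL0L [Hx0L HKL]].
    assert (HKe : K <= eps * L).
    { replace K with (K / eps * eps) by (field; lra). nra. }
    destruct (HL0 L HL0L) as [pr E].
    assert (B := integral_eventual_bounds f x0 L M lo hi pr (conj Hx0 (Rlt_le _ _ Hx0L)) HM Hf).
    apply Rabs_lt_between in E.
    set (q := RiemannInt pr / L) in E.
    assert (Hq : RiemannInt pr = q * L) by (unfold q; field; lra).
    rewrite Hq in B.
    assert ((Rabs lo + M) * x0 <= K /\ (Rabs hi + M) * x0 <= K)
      by (unfold K; generalize (Rabs_pos lo) (Rabs_pos hi); nra).
    split; apply (Rmult_le_reg_r L); nra. }
  split.
  - apply Rle_plus_epsilon. intros e He. destruct (Happrox (e / 2)); lra.
  - apply Rle_plus_epsilon. intros e He. destruct (Happrox (e / 2)); lra.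
Qed.

Lemma mean_limit_close (F f : R -> R) (m1 m2 a B : R) :
  mean_limit F m1 -> mean_limit f m2 ->
  (forall x, Rabs (F x - f x - a) <= B) -> Rabs (m1 - m2 - a) <= B.
Proof.
  intros H1 H2 HB. apply Rabs_le_between'.
  apply (mean_limit_between (fun x => F x - f x) (m1 - m2) 1 (Rabs a + B)).
  - lra.
  - exact (mean_limit_minus F f m1 m2 H1 H2).
  - intros x. apply (Rle_trans _ (Rabs a + Rabs (F x - f x - a))); [|generalize (HB x); lra].
    replace (F x - f x) with (a + (F x - f x - a)) at 1 by ring. apply Rabs_triang.
  - intros x _. apply Rabs_le_between', HB.
Qed.

Lemma strain_shift (G s : R -> R) (J B rs rg : R) :
  mean_limit (fun x => G x - J + s x) rs -> mean_limit G rg ->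
  (forall x, Rabs (s x) <= B) -> rg - J - B <= rs <= rg - J + B.
Proof.
  intros Hs Hg HB.
  assert (Hclose := mean_limit_close _ _ rs rg (- J) B Hs Hg).
  apply Rabs_le_between' in Hclose; [lra |].
  intros x. replace (G x - J + s x - G x - - J) with (s x) by ring. apply HB.
Qed.

Lemma sgn_pos (r : R) : 0 < r -> sgn r = 1.
Proof. intros Hr. unfold sgn. destruct (Rlt_dec 0 r); [reflexivity | lra]. Qed.

Lemma sgn_neg (r : R) : r < 0 -> sgn r = -1.
Proof.
  intros Hr. unfold sgn.
  destruct (Rlt_dec 0 r); [lra |]. destruct (Rlt_dec r 0); [reflexivity | lra].
Qed.

Lemma zero_derivative_const (f : R -> R) (x y : R) :
  (forall c, Rmin x y <= c <= Rmax x y -> derivable_pt_lim f c 0) -> f y = f x.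
Proof.
  intros Hf. destruct (MVT_abs f (fun _ => 0) x y Hf) as [c [Hc _]].
  rewrite Rabs_R0, Rmult_0_l in Hc.
  apply Rminus_diag_uniq, Rabs_eq_0, Hc.
Qed.

Lemma potential_constant_nonneg (Psi dPsi ddPsi : R -> R -> R) (CPsi : R) :
  potential_family Psi dPsi ddPsi CPsi -> 0 <= CPsi.
Proof.
  intros HPsi. destruct (HPsi 1 ltac:(lra)) as [_ [_ [_ [_ [_ [HdPsi _]]]]]].
  apply (Rle_trans _ _ _ (Rabs_pos (dPsi 1 0)) (HdPsi 0)).
Qed.

Section RegularisedPotential.
Variables (Psi dPsi ddPsi : R -> R -> R) (CPsi d Id : R).
Hypothesis HPsi : potential_family Psi dPsi ddPsi CPsi.
Hypothesis Hd : 0 < d.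
Hypothesis HId : improper_int (fun r => dPsi d r - sgn r) (2 * Id).

(* Psi_delta' = 1 on [delta, oo), so Psi_delta(r) - r is constant there. *)
Lemma psi_affine_right (x y : R) : d <= x -> d <= y -> Psi d y - y = Psi d x - x.
Proof.
  intros Hx Hy. destruct (HPsi d Hd) as [Hder [_ [_ [_ [Hsgn _]]]]].
  apply (zero_derivative_const (fun r => Psi d r - r)). intros c Hc.
  assert (Hcd : d <= c) by (apply (Rle_trans _ (Rmin x y)); [apply Rmin_glb|]; lra).
  replace 0 with (dPsi d c - 1) by (rewrite Hsgn, sgn_pos by lra; ring).
  apply derivable_pt_lim_minus; [apply Hder | apply derivable_pt_lim_id].
Qed.

(* Psi_delta' = -1 on (-oo, -delta], so Psi_delta(r) + r is constant there. *)
Lemma psi_affine_left (x y : R) : x <= - d -> y <= - d -> Psi d y + y = Psi d x + x.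
Proof.
  intros Hx Hy. destruct (HPsi d Hd) as [Hder [_ [_ [_ [Hsgn _]]]]].
  apply (zero_derivative_const (fun r => Psi d r + r)). intros c Hc.
  assert (Hcd : c <= - d) by (apply (Rle_trans _ (Rmax x y)); [|apply Rmax_lub]; lra).
  replace 0 with (dPsi d c + 1) by (rewrite Hsgn, sgn_neg by lra; ring).
  apply derivable_pt_lim_plus; [apply Hder | apply derivable_pt_lim_id].
Qed.

Lemma dPsi_continuous (x : R) : continuous (dPsi d) x.
Proof.
  destruct (HPsi d Hd) as [_ [Hder2 _]].
  apply continuity_pt_filterlim, derivable_continuous_pt.
  exists (ddPsi d x). apply Hder2.
Qed.

(* Fundamental theorem of calculus on [a, 0] and [0, b], where sgn is constant. *)
Lemma integral_dPsi_minus_sgn (a b : R) : a < 0 -> 0 < b ->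
  is_RInt (fun r => dPsi d r - sgn r) a b (Psi d b - b - (Psi d a + a)).
Proof.
  intros Ha Hb. destruct (HPsi d Hd) as [Hder _].
  replace (Psi d b - b - (Psi d a + a)) with
    (plus (minus (Psi d 0 + 0) (Psi d a + a)) (minus (Psi d b - b) (Psi d 0 - 0)))
    by (unfold plus, minus, opp; simpl; unfold plus, opp; simpl; ring).
  apply (@is_RInt_Chasles R_NormedModule _ a 0 b).
  - apply is_RInt_ext with (fun r => dPsi d r + 1).
    + intros x Hx. rewrite Rmin_left, Rmax_right in Hx by lra.
      rewrite sgn_neg by lra. change (dPsi d x + 1 = dPsi d x - -1). ring.
    + apply (@is_RInt_derive R_CompleteNormedModule (fun r => Psi d r + r)).
      * intros x _. apply is_derive_Reals, derivable_pt_lim_plus;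
          [apply Hder | apply derivable_pt_lim_id].
      * intros x _. apply (continuous_plus (dPsi d) (fun _ => 1));
          [apply dPsi_continuous | apply continuous_const].
  - apply is_RInt_ext with (fun r => dPsi d r - 1).
    + intros x Hx. rewrite Rmin_left, Rmax_right in Hx by lra.
      rewrite sgn_pos by lra. change (dPsi d x - 1 = dPsi d x - 1). reflexivity.
    + apply (@is_RInt_derive R_CompleteNormedModule (fun r => Psi d r - r)).
      * intros x _. apply is_derive_Reals, derivable_pt_lim_minus;
          [apply Hder | apply derivable_pt_lim_id].
      * intros x _. apply (continuous_minus (dPsi d) (fun _ => 1));
          [apply dPsi_continuous | apply continuous_const].
Qed.

(* The jump of Psi_delta across the window is determined by I_delta: taking the
   improper integral over intervals containing [a, b], the integrand's
   primitive is constant outside the window by the two affine lemmas. *)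
Lemma psi_jump (a b : R) : a <= - d -> d <= b -> Psi d b - Psi d a = 2 * Id + a + b.
Proof.
  intros Ha Hb.
  assert (Happrox : forall eps, 0 < eps -> Rabs (Psi d b - b - (Psi d a + a) - 2 * Id) < eps).
  { intros eps Heps. destruct (HId eps Heps) as [M HM].
    set (a' := Rmin a (- Rabs M - 1)). set (b' := Rmax b (Rabs M + 1)).
    assert (a' <= a /\ a' <= - Rabs M - 1) as [Ha1 Ha2] by (split; [apply Rmin_l | apply Rmin_r]).
    assert (b <= b' /\ Rabs M + 1 <= b') as [Hb1 Hb2] by (split; [apply Rmax_l | apply Rmax_r]).
    assert (HMabs : M <= Rabs M /\ - M <= Rabs M) by (split; [apply Rle_abs | apply Rabs_maj2]).
    destruct (HM a' b' ltac:(lra) ltac:(lra)) as [pr Hpr].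
    rewrite <- (RInt_Reals _ _ _ pr),
      (is_RInt_unique _ _ _ _ (integral_dPsi_minus_sgn a' b' ltac:(lra) ltac:(lra))),
      (psi_affine_right b b'), (psi_affine_left a a') in Hpr by lra.
    exact Hpr. }
  assert (Hzero : Rabs (Psi d b - b - (Psi d a + a) - 2 * Id) <= 0).
  { apply Rle_plus_epsilon. intros eps Heps. rewrite Rplus_0_l. apply Rlt_le, Happrox, Heps. }
  apply Rabs_le_between in Hzero. lra.
Qed.

(* I_delta = O(delta): it is half the jump of Psi_delta across [-delta, delta],
   and |Psi_delta'| <= C_Psi. *)
Lemma I_bound : Rabs Id <= CPsi * d.
Proof.
  destruct (HPsi d Hd) as [Hder [_ [_ [_ [_ [HdPsi _]]]]]].
  destruct (MVT_abs (Psi d) (dPsi d) (- d) d (fun c _ => Hder c)) as [c [Hc _]].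
  rewrite (psi_jump (- d) d) in Hc by lra.
  replace (2 * Id + - d + d) with (2 * Id) in Hc by ring.
  replace (d - - d) with (2 * d) in Hc by ring.
  rewrite Rabs_mult, (Rabs_pos_eq 2), (Rabs_pos_eq (2 * d)) in Hc by lra.
  assert (Rabs (dPsi d c) * (2 * d) <= CPsi * (2 * d)) by (apply Rmult_le_compat_r; [lra | apply HdPsi]).
  lra.
Qed.

Lemma Upsilon_regularised (rp rm : R) : d <= rp -> rm <= - d ->
  Upsilon (Phid (Psi d)) (dPhid (dPsi d)) rp rm = - 2 * Id - rp - rm.
Proof.
  intros Hp Hm. destruct (HPsi d Hd) as [_ [_ [_ [_ [Hsgn _]]]]].
  unfold Upsilon, Phid, dPhid.
  rewrite (Hsgn rp), (Hsgn rm), sgn_pos, sgn_neg by lra.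
  replace (/ 2 * rp ^ 2 - Psi d rp - (/ 2 * rm ^ 2 - Psi d rm))
    with (/ 2 * rp ^ 2 - / 2 * rm ^ 2 - (Psi d rp - Psi d rm)) by ring.
  rewrite (psi_jump rm rp) by lra. field.
Qed.

End RegularisedPotential.

Lemma Upsilon_sharp (rp rm : R) : 0 < rp -> rm < 0 -> Upsilon Phi0 dPhi0 rp rm = - rp - rm.
Proof.
  intros Hp Hm. unfold Upsilon, Phi0, dPhi0.
  rewrite sgn_pos, sgn_neg, Rabs_pos_eq, Rabs_left by lra. field.
Qed.

Theorem lemma5p1
  (* standing constants of the unperturbed theory *)
  (c0 x0 r0 d0 D0 : R)
  (* potentials, their derivatives, and I_delta *)
  (Psi dPsi ddPsi : R -> R -> R) (CPsi : R) (I : R -> R)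
  (* speeds, wave number *)
  (c1 c k : R)
  (* unperturbed wave R_0 and its derivative *)
  (R0 dR0 : R -> R)
  (* correctors S_delta with derivative dS_delta, range delta0, constant C *)
  (delta0 C : R) (S dS : R -> R -> R)
  (Hc0 : 0 < c0 < 1) (Hx0 : 0 < x0) (Hr0 : 0 < r0) (Hd0 : 0 < d0) (HD0 : 0 < D0)
  (HPsi : potential_family Psi dPsi ddPsi CPsi)
  (HI : forall d, 0 < d -> improper_int (fun r => dPsi d r - sgn r) (2 * I d))
  (Hc1 : c0 < c1 < 1) (Hc : c0 < c < c1)
  (* k = k_c : the unique positive solution of a(k) = c *)
  (Hk : 0 < k /\ adisp k = c /\ forall k', 0 < k' -> adisp k' = c -> k' = k)
  (* R_0 in R_c *)
  (HR0d : forall x, derivable_pt_lim R0 x (dR0 x))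
  (HR0W : exists M, forall x y,
            Rabs (R0 x) <= M /\ Rabs (dR0 x) <= M /\
            Rabs (dR0 x - dR0 y) <= M * Rabs (x - y))
  (HR0eq : forall x, R0 (x - 1) <> 0 -> R0 x <> 0 -> R0 (x + 1) <> 0 ->
             exists l, derivable_pt_lim dR0 x l /\
               c ^ 2 * l = Delta1 (fun y => R0 y - sgn (R0 y)) x)
  (HR00 : R0 0 = 0)
  (HR0form : exists (Rbar : R -> R) (al be : R),
      (forall x, R0 x = Rbar x + al * (cos (k * x) - 1) + be * sin (k * x)) /\
      (exists lp, lim_pinf Rbar lp) /\
      (exists alm bem lm,
         lim_minf (fun x => Rbar x - alm * (cos (k * x) - 1) - bem * sin (k * x)) lm))
  (HR0bd : forall x, Rabs (R0 x) <= D0 / (1 - c ^ 2))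
  (HR0p : forall x, x0 < x -> r0 < R0 x)
  (HR0m : forall x, x < - x0 -> R0 x < - r0)
  (HR0mono : forall x, Rabs x < x0 -> d0 < dR0 x)
  (* the travelling waves R_delta = R_0 - I_delta + S_delta of the Main Theorem *)
  (Hdelta0 : 0 < delta0) (HC : 0 <= C)
  (HS : forall d, 0 < d < delta0 ->
     (forall x, derivable_pt_lim (S d) x (dS d x)) /\
     (forall x y, Rabs (dS d x - dS d y) <= C * Rabs (x - y)) /\
     S d 0 = 0 /\
     (forall x, Rabs (S d x) <= C * d ^ 2) /\
     (forall x, Rabs (dS d x) <= C * d) /\
     (exists lp, lim_pinf (S d) lp) /\
     (exists am bm lm,
        lim_minf (fun x => S d x - am * (cos (k * x) - 1) - bm * sin (k * x)) lm) /\
     (forall x, exists l,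
        derivable_pt_lim (fun y => dR0 y + dS d y) x l /\
        c ^ 2 * l = Delta1 (fun y => (R0 y - I d + S d y)
                                      - dPsi d (R0 y - I d + S d y)) x)) :
  exists K delta1, 0 < delta1 <= delta0 /\
    forall d, 0 < d < delta1 ->
    forall rp rm r0p r0m,
      mean_limit (fun x => R0 x - I d + S d x) rp ->
      mean_limit (fun x => R0 (- x) - I d + S d (- x)) rm ->
      mean_limit R0 r0p ->
      mean_limit (fun x => R0 (- x)) r0m ->
      Rabs (Upsilon (Phid (Psi d)) (dPhid (dPsi d)) rp rm
            - Upsilon Phi0 dPhi0 r0p r0m) <= K * d ^ 2.
Proof.
  destruct HR0W as [M HM].
  assert (HR0M : forall x, - M <= R0 x <= M) by (intros x; apply Rabs_le_between, (HM x x)).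
  assert (HCPsi := potential_constant_nonneg Psi dPsi ddPsi CPsi HPsi).
  set (Q := CPsi + C + 1).
  exists (2 * C), (Rmin delta0 (Rmin 1 (r0 / Q))).
  split; [split; [apply Rmin_glb_lt; [|apply Rmin_glb_lt]; unfold Q;
                  try apply Rdiv_lt_0_compat; lra | apply Rmin_l] |].
  intros d [Hd Hd1] rp rm r0p r0m Hrp Hrm Hr0p Hr0m.
  apply Rmin_Rgt in Hd1 as [Hdelta Hd1]. apply Rmin_Rgt in Hd1 as [Hdlt1 HdQ].
  apply Rlt_div_r in HdQ; [| unfold Q; lra].
  destruct (HS d (conj Hd Hdelta)) as [_ [_ [_ [HSd _]]]].
  assert (HId := I_bound Psi dPsi ddPsi CPsi d (I d) HPsi Hd (HI d Hd)).
  apply Rabs_le_between in HId.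
  assert (Hr0p_pos : r0 <= r0p).
  { apply (mean_limit_between R0 r0p x0 M r0 M Hx0 Hr0p (fun x => proj1 (HM x x))).
    intros x Hx. split; [apply Rlt_le, HR0p, Hx | apply HR0M]. }
  assert (Hr0m_neg : r0m <= - r0).
  { apply (mean_limit_between (fun x => R0 (- x)) r0m x0 M (- M) (- r0) Hx0 Hr0m
      (fun x => proj1 (HM (- x) (- x)))).
    intros x Hx. split; [apply HR0M | apply Rlt_le, HR0m; lra]. }
  (* the strains of R_delta are those of R_0 shifted by - I_delta, up to C d^2 *)
  assert (Ep := strain_shift R0 (S d) (I d) _ rp r0p Hrp Hr0p HSd).
  assert (Em := strain_shift (fun x => R0 (- x)) (fun x => S d (- x)) (I d) _ rm r0m
                  Hrm Hr0m (fun x => HSd (- x))).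
  (* in particular they lie outside the regularisation window (-d, d) *)
  assert (HCd : C * d ^ 2 <= C * d) by (simpl; nra).
  rewrite (Upsilon_regularised Psi dPsi ddPsi CPsi d (I d) HPsi Hd (HI d Hd) rp rm)
    by (unfold Q in HdQ; nra).
  rewrite Upsilon_sharp by lra.
  apply Rabs_le_between. lra.
Qed.
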